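(* Let $f\in H^1(\mathbb S)$ and $\overline\omega\in\widehat L_2(\mathbb S)$. For $(x,y)\in\mathbb R^2\setminus\{(x,f(x)):x\in\mathbb R\}$ let $$V^1(x,y):=-\frac1{4\pi}\int_{-\pi}^{\pi}\overline\omega(s)\frac{\tanh((y-f(s))/2)\,[1+\tan^2((x-s)/2)]}{\tan^2((x-s)/2)+\tanh^2((y-f(s))/2)}\,ds,$$ $$V^2(x,y):=\frac1{4\pi}\int_{-\pi}^{\pi}\overline\omega(s)\frac{\tan((x-s)/2)\,[1-\tanh^2((y-f(s))/2)]}{\tan^2((x-s)/2)+\tanh^2((y-f(s))/2)}\,ds,$$ set $V:=(V^1,V^2)$, $\Omega_\pm:=\{(x,y)\in\mathbb R^2:\pm(f(x)-y)<0\}$ and $V_\pm:=V|_{\Omega_\pm}$. Then there exists a constant $C=C(\|f\|_\infty)>0$ such that $$|V_\pm(x,y)|\le C\|\overline\omega\|_1e^{-|y|/2}$$ for all $(x,y)\in\Omega_\pm$ with $|y|\ge 1+2\|f\|_\infty$.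
   Context: $\mathbb S:=\mathbb R/2\pi\mathbb Z$; functions on $\mathbb S$ are $2\pi$-periodic functions on $\mathbb R$. $H^1(\mathbb S)$ is the periodic Sobolev space, $\widehat L_2(\mathbb S):=\{h\in L_2(\mathbb S):\int_{-\pi}^{\pi}h\,dx=0\}$, and $\|\overline\omega\|_1:=\int_{-\pi}^{\pi}|\overline\omega|\,dx$. *)

From mathcomp Require Import all_boot all_order all_algebra.
From mathcomp Require Import all_classical all_reals all_analysis.
Set Implicit Arguments. Unset Strict Implicit. Unset Printing Implicit Defensive.
Import Order.TTheory GRing.Theory Num.Theory.
Local Open Scope classical_set_scope.
Local Open Scope ring_scope.

Section Defs.
Variable R : realType.

Definition lmu := (@lebesgue_measure R).

Definition tanh (x : R) : R := (expR x - expR (- x)) / (expR x + expR (- x)).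

(* 2pi-periodic functions = functions on S = R / 2piZ *)
Definition periodic2pi (f : R -> R) : Prop := forall x, f (x + 2 * pi) = f x.

(* square integrable on [-pi, pi] (measurability included in integrability) *)
Definition L2_period (g : R -> R) : Prop :=
  lmu.-integrable `[- pi, pi] (fun s => ((g s) ^+ 2)%:E).

(* H^1(S): (continuous representative of) a 2pi-periodic function which is
   absolutely continuous with square-integrable (weak) derivative g *)
Definition H1S (f : R -> R) : Prop :=
  periodic2pi f /\
  exists g : R -> R, L2_period g /\
    forall x, - pi <= x <= pi ->
      f x = f (- pi) + Rintegral lmu `[- pi, x] g.

Definition hatL2S (w : R -> R) : Prop :=
  periodic2pi w /\ L2_period w /\ Rintegral lmu `[- pi, pi] w = 0.

Definition supnorm (f : R -> R) : R := sup (range (fun x => `|f x|)).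

Definition norm1 (w : R -> R) : R := Rintegral lmu `[- pi, pi] (fun s => `|w s|).

Definition V1 (f w : R -> R) (x y : R) : R :=
  - (4 * pi)^-1 * Rintegral lmu `[- pi, pi] (fun s =>
      w s * (tanh ((y - f s) / 2) * (1 + (tan ((x - s) / 2)) ^+ 2))
          / ((tan ((x - s) / 2)) ^+ 2 + (tanh ((y - f s) / 2)) ^+ 2)).

Definition V2 (f w : R -> R) (x y : R) : R :=
  (4 * pi)^-1 * Rintegral lmu `[- pi, pi] (fun s =>
      w s * (tan ((x - s) / 2) * (1 - (tanh ((y - f s) / 2)) ^+ 2))
          / ((tan ((x - s) / 2)) ^+ 2 + (tanh ((y - f s) / 2)) ^+ 2)).

Definition normV (f w : R -> R) (x y : R) : R :=
  Num.sqrt (V1 f w x y ^+ 2 + V2 f w x y ^+ 2).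

(* Omega_+ (sign = true) and Omega_- (sign = false) *)
Definition Omega (sgn : bool) (f : R -> R) (x y : R) : Prop :=
  if sgn then f x - y < 0 else - (f x - y) < 0.

End Defs.

From mathcomp Require Import all_boot all_order all_algebra.
From mathcomp Require Import all_classical all_reals all_analysis.
From mathcomp Require Import ring lra.
Set Implicit Arguments. Unset Strict Implicit. Unset Printing Implicit Defensive.
Import Order.TTheory GRing.Theory Num.Theory.
Local Open Scope ring_scope.
Local Open Scope classical_set_scope.

(* Write V^1 and V^2 as (4 pi)^-1 times integrals of w(s) against the kernels
   kernel1 and kernel2 below, evaluated at t = tan((x-s)/2) and
   u = tanh((y-f(s))/2).  When |y| >= 1 + 2 ||f||_oo, u has the sign of y and
   1 - |u| is of order exp(-|y|/2), uniformly in s; then kernel2 = O(exp(-|y|/2))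
   and kernel1 = +-1 + O(exp(-|y|/2)).  This bounds V^2 directly, and V^1 as
   well because the constant +-1 integrates to zero against the mean-free w.
   Only w^2 is known to be measurable, so the integrands need not be
   measurable: the argument uses only monotonicity and homogeneity of the
   integral of nonnegative functions, and exploits the zero mean of w through
   the equality of the integrals of its positive and negative parts. *)

(* For f >= 0 the integral is the supremum of the integrals of the simple
   functions below f, whether or not f is measurable. *)
Section integral_nonmeasurable.
Context d (T : measurableType d) (R : realType).
Variable mu : {measure set T -> \bar R}.
Implicit Types (D : set T) (f : T -> \bar R).

Lemma ge0_le_integral_nomeas D f1 f2 :
  (forall x, D x -> 0 <= f1 x)%E -> (forall x, D x -> f1 x <= f2 x)%E ->
  (\int[mu]_(x in D) f1 x <= \int[mu]_(x in D) f2 x)%E.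
Proof.
move=> f10 f12.
have f20 x : D x -> (0 <= f2 x)%E by move=> Dx; exact: le_trans (f10 x Dx) (f12 x Dx).
rewrite (ge0_integralE mu f10) (ge0_integralE mu f20).
apply: ge_ereal_sup => _ [h /= hf <-]; apply: ereal_sup_ubound; exists h => //= x.
by apply: le_trans (hf x) _; rewrite /patch; case: ifP => // /set_mem /f12.
Qed.

Lemma ge0_subset_integral_nomeas (A B : set T) f : A `<=` B ->
  (forall x, B x -> 0 <= f x)%E ->
  (\int[mu]_(x in A) f x <= \int[mu]_(x in B) f x)%E.
Proof.
move=> AB f0; rewrite (integral_mkcond A) (integral_mkcond B).
apply: ge0_le_integral_nomeas => x _; rewrite /patch.
  by case: ifP => // /set_mem /AB /f0.
case: ifP => [/set_mem /AB Bx|_]; first by rewrite ifT //; exact/mem_set.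
by case: ifP => // /set_mem /f0.
Qed.

Lemma ge0_integralZl_nomeas D f (c : R) : 0 < c ->
  (forall x, D x -> 0 <= f x)%E ->
  (\int[mu]_(x in D) (c%:E * f x) = c%:E * \int[mu]_(x in D) f x)%E.
Proof.
have le_scale (k : R) g : 0 < k -> (forall x, D x -> 0 <= g x)%E ->
    (k%:E * \int[mu]_(x in D) g x <= \int[mu]_(x in D) (k%:E * g x))%E.
  move=> k0 g0.
  have kg0 x : D x -> (0 <= k%:E * g x)%E by move=> /g0; apply: mule_ge0; rewrite lee_fin ltW.
  rewrite (ge0_integralE mu g0) (ge0_integralE mu kg0) -lee_pdivlMl //.
  apply: ge_ereal_sup => _ [h /= hg <-]; rewrite lee_pdivlMl // -sintegralrM.
  apply: ereal_sup_ubound; exists (scale_nnsfun h (ltW k0)) => //= x.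
  have := hg x; rewrite /patch; case: ifP => _.
    by rewrite EFinM lee_pmul2l ?lte_fin.
  by rewrite !lee_fin => h0; rewrite pmulr_rle0.
move=> c0 f0; apply/eqP; rewrite eq_le le_scale // andbT.
have cf0 x : D x -> (0 <= c%:E * f x)%E by move=> /f0; apply: mule_ge0; rewrite lee_fin ltW.
have ci0 : 0 < c^-1 by rewrite invr_gt0.
have cancel_c : (\int[mu]_(x in D) (c^-1%:E * (c%:E * f x)) = \int[mu]_(x in D) f x)%E.
  by apply: eq_integral => x _; rewrite muleA -EFinM mulVf ?gt_eqF // mul1e.
rewrite -(@lee_pmul2l _ c^-1%:E) ?lte_fin // muleA -EFinM mulVf ?gt_eqF // mul1e -cancel_c.
exact: le_scale.
Qed.

End integral_nonmeasurable.

Section Rintegral_nonmeasurable.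
Context d (T : measurableType d) (R : realType).
Variable mu : {measure set T -> \bar R}.
Implicit Types (D : set T) (h w : T -> R).

Lemma RintegralN D h :
  Rintegral mu D (fun x => - h x) = - Rintegral mu D h.
Proof.
have fineBC (a b : \bar R) : (0 <= a)%E -> (0 <= b)%E -> fine (b - a)%E = - fine (a - b)%E.
  by case: a => [a||]; case: b => [b||] //= *; rewrite ?opprB ?oppr0.
rewrite /Rintegral (_ : (fun x => (- h x)%:E) = (\- (EFin \o h))%E) //.
rewrite integralE funeposN funenegN [in RHS]integralE.
by apply: fineBC; apply: integral_ge0 => x _; [exact: funepos_ge0|exact: funeneg_ge0].
Qed.

Lemma integralE_max D h : (\int[mu]_(x in D) (h x)%:E =
  \int[mu]_(x in D) (Num.max (h x) 0)%:E - \int[mu]_(x in D) (Num.max (- h x) 0)%:E)%E.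
Proof.
rewrite integralE; congr (_ - _)%E; apply: eq_integral => x _.
  by rewrite funeposE EFin_max.
by rewrite funenegE EFin_max.
Qed.

Lemma ge0_le_EFin_real (e : \bar R) (X : R) : (0 <= e)%E -> (e <= X%:E)%E ->
  exists2 a, e = a%:E & 0 <= a <= X.
Proof. by case: e => [a||] //=; rewrite !lee_fin => a0 aX; exists a; rewrite ?a0. Qed.

Let max0_ge0 (r : R) : 0 <= Num.max r 0.
Proof. by rewrite le_max lexx orbT. Qed.

Lemma integral_max0_ge0 D h : (0 <= \int[mu]_(x in D) (Num.max (h x) 0)%:E)%E.
Proof. by apply: integral_ge0 => x _; rewrite lee_fin. Qed.

Lemma abs_Rintegral_le D h (X : R) :
  (\int[mu]_(x in D) (Num.max (h x) 0)%:E <= X%:E)%E ->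
  (\int[mu]_(x in D) (Num.max (- h x) 0)%:E <= X%:E)%E ->
  `|Rintegral mu D h| <= X.
Proof.
rewrite /Rintegral integralE_max.
move=> /(ge0_le_EFin_real (integral_max0_ge0 _ _)) [p -> /andP[p0 pX]].
move=> /(ge0_le_EFin_real (integral_max0_ge0 _ _)) [q -> /andP[q0 qX]].
by rewrite -EFinB /= ler_norml; apply/andP; split; lra.
Qed.

Lemma abs_Rintegral_le_mul D h w (c W : R) : 0 < c ->
  (\int[mu]_(x in D) (`|w x|)%:E <= W%:E)%E ->
  (forall x, D x -> `|h x| <= c * `|w x|) -> `|Rintegral mu D h| <= c * W.
Proof.
move=> c0 wW hw.
have cwW : (\int[mu]_(x in D) (c%:E * (`|w x|)%:E) <= (c * W)%:E)%E.
  by rewrite ge0_integralZl_nomeas // ?EFinM ?lee_pmul2l ?lte_fin // => x _; rewrite lee_fin.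
have cw0 x : 0 <= c * `|w x| by rewrite mulr_ge0 ?(ltW c0).
apply: abs_Rintegral_le; apply: le_trans cwW; apply: ge0_le_integral_nomeas => x Dx;
  rewrite -?EFinM lee_fin ?le_max ?lexx ?orbT // ge_max cw0 andbT.
- exact: le_trans (ler_norm _) (hw x Dx).
- by apply: le_trans (hw x Dx); rewrite -normrN ler_norm.
Qed.

Lemma integral_mul_near1 D (g m : T -> R) (a e : R) : 0 <= e ->
  (forall x, D x -> 0 <= g x) -> (forall x, D x -> 0 <= m x /\ `|m x - 1| <= e) ->
  (\int[mu]_(x in D) (g x)%:E = a%:E)%E ->
  exists2 p, (\int[mu]_(x in D) (m x * g x)%:E = p%:E)%E &
    (1 - e) * a <= p <= (1 + e) * a.
Proof.
move=> e0 g0 me ga.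
have a0 : 0 <= a by rewrite -lee_fin -ga; apply: integral_ge0 => x /g0; rewrite lee_fin.
have mg0 x : D x -> (0 <= (m x * g x)%:E)%E.
  by move=> Dx; rewrite lee_fin mulr_ge0 ?g0 //; case: (me x Dx).
have scaled (c : R) : 0 < c ->
    (\int[mu]_(x in D) (c * g x)%:E = (c * a)%:E)%E.
  move=> c0; under eq_integral do rewrite EFinM.
  by rewrite ge0_integralZl_nomeas // ?ga // => x /g0; rewrite lee_fin.
have le_upper : (\int[mu]_(x in D) (m x * g x)%:E <= ((1 + e) * a)%:E)%E.
  rewrite -scaled; last lra.
  apply: ge0_le_integral_nomeas => // x Dx; rewrite lee_fin ler_wpM2r ?g0 //.
  by case: (me x Dx) => _; rewrite ler_norml => /andP[_]; lra.
have [p mgp /andP[p0 pa]] := ge0_le_EFin_real (integral_ge0 _ mg0) le_upper.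
exists p => //; rewrite pa andbT.
have [e1|e1] := ltP e 1; last by apply: le_trans p0; rewrite mulr_le0_ge0 //; lra.
rewrite -lee_fin -mgp -scaled; last lra.
apply: ge0_le_integral_nomeas => x Dx; rewrite lee_fin.
  by rewrite mulr_ge0 ?g0 //; lra.
rewrite ler_wpM2r ?g0 //.
by case: (me x Dx) => _; rewrite ler_norml => /andP[+ _]; lra.
Qed.

(* The integral is not additive here, so [w * k] cannot be split as
   [w * (k - 1) + w]; instead the positive and negative parts of [w * k] are
   compared with those of [w], whose integrals coincide. *)
Lemma abs_Rintegral_mean0_mul D w k (e W : R) (b : bool) : 0 <= e ->
  (\int[mu]_(x in D) (`|w x|)%:E <= W%:E)%E -> Rintegral mu D w = 0 ->
  (forall x, D x -> 0 <= (-1) ^+ b * k x /\ `|(-1) ^+ b * k x - 1| <= e) ->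
  `|Rintegral mu D (fun x => w x * k x)| <= 2 * e * W.
Proof.
move=> e0 wW w0; wlog -> : k b / b = false => [hwlog|].
  case: b => [kN|]; last exact: hwlog.
  rewrite -normrN -RintegralN; under eq_Rintegral do rewrite -mulrN.
  by apply: (hwlog _ false) => // x /kN; rewrite expr0 expr1 mul1r mulN1r.
move=> /= k1; have {}k1 x : D x -> 0 <= k x /\ `|k x - 1| <= e.
  by move=> /k1; rewrite expr0 mul1r.
have part_le (g : T -> R) : (forall x, Num.max (g x) 0 <= `|w x|) ->
    exists2 a, (\int[mu]_(x in D) (Num.max (g x) 0)%:E = a%:E)%E & 0 <= a <= W.
  move=> gw; apply: ge0_le_EFin_real (integral_max0_ge0 _ _) (le_trans _ wW).
  by apply: ge0_le_integral_nomeas => x _; rewrite lee_fin ?le_max ?lexx ?orbT.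
have [a wpa /andP[a0 aW]] : exists2 a,
    (\int[mu]_(x in D) (Num.max (w x) 0)%:E = a%:E)%E & 0 <= a <= W.
  by apply: part_le => x; rewrite ge_max normr_ge0 ler_norm.
have [a' wna _] : exists2 a',
    (\int[mu]_(x in D) (Num.max (- w x) 0)%:E = a'%:E)%E & 0 <= a' <= W.
  by apply: part_le => x; rewrite ge_max normr_ge0 -normrN ler_norm.
have a'a : a' = a.
  by move: w0; rewrite /Rintegral integralE_max wpa wna -EFinB /= => /eqP; rewrite subr_eq0 => /eqP.
have max_mulk (g : T -> R) x : D x -> Num.max (g x * k x) 0 = k x * Num.max (g x) 0.
  by move=> /k1 [k0 _]; rewrite maxr_pMr // mulr0 mulrC.
have [p wkp /andP[p1 p2]] := integral_mul_near1 e0 (fun x _ => max0_ge0 (w x)) k1 wpa.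
have [q wkq /andP[q1 q2]] := integral_mul_near1 e0 (fun x _ => max0_ge0 (- w x)) k1 wna.
rewrite /Rintegral integralE_max.
under eq_integral => x /set_mem Dx do rewrite (max_mulk w x Dx).
rewrite wkp.
under eq_integral => x /set_mem Dx do rewrite -mulNr (max_mulk (fun x => - w x) x Dx).
rewrite wkq -EFinB /=; subst a'.
have eaW : e * a <= e * W by rewrite ler_wpM2l.
by rewrite ler_norml; apply/andP; split; nra.
Qed.

End Rintegral_nonmeasurable.

Lemma normr_le_1Dsqr (R : realDomainType) (a : R) : `|a| <= 1 + a ^+ 2.
Proof. by rewrite -real_normK ?num_real //; have := normr_ge0 a; nra. Qed.

Section periodic_functions.
Variable R : realType.
Local Notation mu := (@lebesgue_measure R).
Local Notation Dpi := (`[- pi, pi] : set R).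
Implicit Types (f g w : R -> R).

Lemma L2_period_integral_1Dsqr g : L2_period g ->
  exists X, (\int[mu]_(x in Dpi) (1 + g x ^+ 2)%:E = X%:E)%E.
Proof.
move=> g2; have /integrableP [mg2 _] := g2.
have g2_fin : (\int[mu]_(x in Dpi) (g x ^+ 2)%:E)%E \is a fin_num.
  exact: integrable_fin_num.
have muDpi : mu Dpi = (pi + pi)%:E.
  rewrite lebesgue_measure_itv /= lte_fin ifT ?opprK ?EFinD //.
  by have := @pi_gt0 R; lra.
exists (pi + pi + fine (\int[mu]_(x in Dpi) (g x ^+ 2)%:E)%E).
under eq_integral do rewrite EFinD.
rewrite ge0_integralD // => [|x _]; last by rewrite lee_fin sqr_ge0.
by rewrite integral_cst // -[X in (X + _)%E]/((1 * mu Dpi)%E) muDpi mul1e !EFinD fineK.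
Qed.

Lemma L2_period_norm1 w : L2_period w ->
  (\int[mu]_(x in Dpi) (`|w x|)%:E = (norm1 w)%:E)%E.
Proof.
move=> /L2_period_integral_1Dsqr [X wX].
have [a wa _] : exists2 a, (\int[mu]_(x in Dpi) (`|w x|)%:E = a%:E)%E & 0 <= a <= X.
  apply: ge0_le_EFin_real; first by apply: integral_ge0 => x _; rewrite lee_fin.
  by rewrite -wX; apply: ge0_le_integral_nomeas => x _; rewrite lee_fin ?normr_le_1Dsqr.
by rewrite /norm1 /Rintegral wa.
Qed.

Lemma H1S_bounded_on_period f : H1S f ->
  exists B, forall x, - pi <= x <= pi -> `|f x| <= B.
Proof.
move=> [_ [g [/L2_period_integral_1Dsqr [X gX] fg]]].
exists (`|f (- pi)| + X) => x /[dup] xpi /andP[_ xlepi].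
rewrite (fg x xpi); apply: le_trans (ler_normD _ _) _; rewrite lerD2l -[X]mul1r.
have g2_ge0 s : 0 <= 1 + g s ^+ 2 by rewrite addr_ge0 ?sqr_ge0.
apply: (@abs_Rintegral_le_mul _ _ _ (lmu (R:=R)) _ g (fun s => 1 + g s ^+ 2)) => // [|s _].
  have sub : `[- pi, x] `<=` Dpi.
    by move=> s /=; rewrite !in_itv /= => /andP[-> sx]; exact: le_trans xlepi.
  rewrite -gX /lmu; under eq_integral do rewrite ger0_norm //.
  by apply: ge0_subset_integral_nomeas => // s _; rewrite lee_fin.
by rewrite mul1r (ger0_norm (g2_ge0 s)) normr_le_1Dsqr.
Qed.

Lemma periodic2pi_bounded f B : periodic2pi f ->
  (forall x, - pi <= x <= pi -> `|f x| <= B) -> forall x, `|f x| <= B.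
Proof.
move=> fper fB.
have pi2 := @pi_ge2 R.
have bounded_n (n : nat) x : `|x| <= (2 * n%:R + 1) * pi -> `|f x| <= B.
  elim: n x => [|n IHn] x; first by rewrite mulr0 add0r mul1r ler_norml; exact: fB.
  rewrite ler_norml -natr1 => /andP[xlo xhi].
  have n0 : 0 <= n%:R * pi :> R by rewrite mulr_ge0 // pi_ge0.
  have [xle|xgt] := lerP x pi; have [xge|xlt] := lerP (- pi) x.
  - by apply: fB; rewrite xle xge.
  - by rewrite -fper; apply: IHn; rewrite ler_norml; apply/andP; split; lra.
  - by rewrite -[x](subrK (2 * pi)) fper; apply: IHn; rewrite ler_norml; apply/andP; split; lra.
  - lra.
move=> x; apply: (bounded_n (Num.Def.archi_bound `|x|)).
have := archi_boundP (normr_ge0 x).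
have : 0 <= (Num.Def.archi_bound `|x|)%:R :> R by [].
nra.
Qed.

Lemma H1S_supnorm f : H1S f -> forall s, `|f s| <= supnorm f.
Proof.
move=> f1; have [B fB] := H1S_bounded_on_period f1.
have {}fB := periodic2pi_bounded f1.1 fB.
move=> s; apply: sup_upper_bound; last by exists s.
by split; [exists `|f 0|, 0 | exists B => _ [z _ <-]].
Qed.

End periodic_functions.

Section kernels.
Variable R : realFieldType.
Implicit Types (t u v : R).

Definition kernel1 t u := u * (1 + t ^+ 2) / (t ^+ 2 + u ^+ 2).
Definition kernel2 t u := t * (1 - u ^+ 2) / (t ^+ 2 + u ^+ 2).

Lemma kernel1N t u : kernel1 t (- u) = - kernel1 t u.
Proof. by rewrite /kernel1 sqrrN !mulNr. Qed.

Lemma kernel2N t u : kernel2 t (- u) = kernel2 t u.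
Proof. by rewrite /kernel2 sqrrN. Qed.

(* The hypothesis on [v] and [E] means [v = tanh (a / 2)] and [E = exp (- a)]
   for some [a > 0] (see [tanh_half_expR] below). *)
Lemma kernel_bounds t v (E : R) : 0 < E <= 2 / 3 -> v * (1 + E) = 1 - E ->
  [/\ 0 <= kernel1 t v, `|kernel1 t v - 1| <= 50 * E & `|kernel2 t v| <= 10 * E].
Proof.
move=> /andP[E0 E23] vE.
have v15 : 1 / 5 <= v by nra.
have v1 : v <= 1 by nra.
have v2 : 1 - v <= 2 * E by nra.
have t2 : 0 <= t ^+ 2 by rewrite sqr_ge0.
have k1_lo : - ((1 - v) * (v - t ^+ 2)) <= 2 * E * t ^+ 2 by nra.
have k1_hi : (1 - v) * (v - t ^+ 2) <= 2 * E by nra.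
have k2_num : 0 <= 1 - v ^+ 2 <= 4 * E by apply/andP; split; nra.
have k2_t : 2 * `|t| <= 5 * (t ^+ 2 + v ^+ 2).
  by rewrite -real_normK ?num_real //; have := sqr_ge0 (`|t| - 1 / 5); nra.
set q := t ^+ 2 + v ^+ 2 in k2_t *.
have q0 : 0 < q by rewrite /q; nra.
have q25 : 1 / 25 <= q by rewrite /q; nra.
have Eq : E * t ^+ 2 <= E * q by rewrite ler_wpM2l ?(ltW E0) // /q lerDl sqr_ge0.
have Eq25 : E * (1 / 25) <= E * q by rewrite ler_wpM2l ?(ltW E0).
split.
- by rewrite /kernel1 divr_ge0 ?(ltW q0) // mulr_ge0; lra.
- have k1q : (kernel1 t v - 1) * q = (1 - v) * (v - t ^+ 2).
    by rewrite /kernel1 -/q mulrBl divfK ?gt_eqF // mul1r /q; ring.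
  by rewrite ler_norml; apply/andP; split; rewrite -(ler_pM2r q0) ?mulNr k1q; lra.
- rewrite /kernel2 -/q !normrM normfV (gtr0_norm q0) ler_pdivrMr //.
  case/andP: k2_num => k2_ge0 k2_le; rewrite (ger0_norm k2_ge0).
  have := ler_wpM2l (normr_ge0 t) k2_le.
  have := ler_wpM2l (ltW E0) k2_t.
  lra.
Qed.

End kernels.

Lemma sqrt_sqrD_le (R : rcfType) (a b : R) : Num.sqrt (a ^+ 2 + b ^+ 2) <= `|a| + `|b|.
Proof.
have -> : `|a| + `|b| = Num.sqrt ((`|a| + `|b|) ^+ 2).
  by rewrite sqrtr_sqr (ger0_norm (addr_ge0 (normr_ge0 a) (normr_ge0 b))).
apply: ler_wsqrtr; rewrite sqrrD -[a ^+ 2]real_normK ?num_real // -[b ^+ 2]real_normK ?num_real //.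
have := mulr_ge0 (normr_ge0 a) (normr_ge0 b); lra.
Qed.

Section tanh.
Variable R : realType.

Lemma tanhN (a : R) : tanh (- a) = - tanh a.
Proof.
by rewrite /tanh opprK -mulNr opprB; congr (_ / _); exact: addrC.
Qed.

Lemma tanh_half_expR (z : R) : tanh (z / 2) * (1 + expR (- z)) = 1 - expR (- z).
Proof.
have ->: expR (- z) = (expR (z / 2) ^+ 2)^-1 by rewrite expRN expr2 -expRD -splitr.
rewrite /tanh expRN; set P := expR (z / 2).
have P0 : 0 < P := expR_gt0 _.
have P2 : P ^+ 2 + 1 != 0 by rewrite gt_eqF //; have := sqr_ge0 P; lra.
field; rewrite gt_eqF ?P2 //; have := sqr_ge0 P; rewrite expr2; lra.
Qed.

Lemma expR_Nhalf_le : expR (- (1 / 2)) <= 2 / 3 :> R.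
Proof.
rewrite expRN -[leLHS]mul1r ler_pdivrMr ?expR_gt0 //.
have := expR_ge1Dx (1 / 2 : R); lra.
Qed.

Lemma kernel_far_field (M y a t : R) : `|a| <= M -> 1 + 2 * M <= `|y| ->
  let u := tanh ((y - a) / 2) in let sg := (-1) ^+ (y < 0)%R in
  [/\ 0 <= sg * kernel1 t u, `|sg * kernel1 t u - 1| <= 50 * expR (- (`|y| / 2))
    & `|kernel2 t u| <= 10 * expR (- (`|y| / 2))].
Proof.
move=> aM yM u sg.
set E := expR (- `|y - a|).
have far : `|y| / 2 + 1 / 2 <= `|y - a|.
  by apply: le_trans (lerB_dist y a); have := normr_ge0 y; lra.
have E23 : E <= 2 / 3.
  by apply: le_trans expR_Nhalf_le; rewrite ler_expR lerN2; have := normr_ge0 y; lra.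
have Ee : E <= expR (- (`|y| / 2)) by rewrite ler_expR; lra.
have E0 : 0 < E <= 2 / 3 by rewrite expR_gt0.
have uv : u = sg * tanh (`|y - a| / 2).
  move: aM; rewrite /u /sg ler_norml => /andP[aMlo aMhi].
  case: ltP => y0 /=.
    have ya : y - a < 0 by move: yM; rewrite ltr0_norm //; lra.
    by rewrite ltr0_norm // expr1 mulN1r mulNr tanhN opprK.
  have ya : 0 <= y - a by move: yM; rewrite ger0_norm //; lra.
  by rewrite ger0_norm // expr0 mul1r.
have [k1 k2 k3] := kernel_bounds t E0 (tanh_half_expR _).
have bounds : [/\ 0 <= kernel1 t (tanh (`|y - a| / 2)),
    `|kernel1 t (tanh (`|y - a| / 2)) - 1| <= 50 * expR (- (`|y| / 2))
  & `|kernel2 t (tanh (`|y - a| / 2))| <= 10 * expR (- (`|y| / 2))].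
  by split; [|apply: le_trans k2 _|apply: le_trans k3 _]; rewrite // ler_wpM2l.
rewrite uv /sg; case: (y < 0)%R => /=; first by rewrite expr1 !mulN1r kernel1N kernel2N opprK.
by rewrite expr0 !mul1r.
Qed.

End tanh.

Theorem lemma2p1 (R : realType) (M : R) :
  exists C : R, 0 < C /\
    forall (f w : R -> R), H1S f -> hatL2S w -> supnorm f = M ->
    forall (sgn : bool) (x y : R), Omega sgn f x y ->
      1 + 2 * supnorm f <= `|y| ->
      normV f w x y <= C * norm1 w * expR (- (`|y| / 2)).
Proof.
(* [|y| >= 1 + 2 ||f||_oo] already keeps (x, y) off the graph of f. *)
have c0 : 0 < (4 * pi)^-1 :> R by rewrite invr_gt0 mulr_gt0 ?pi_gt0.
exists (110 * (4 * pi)^-1); split=> [|f w f1 [_ [w2 w0]] _ sgn x y _ yf]; first exact: mulr_gt0.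
set e := expR (- (`|y| / 2)).
have e0 : 0 < e := expR_gt0 _.
have wW : (\int[lmu (R:=R)]_(s in `[(- pi)%R, pi]) (`|w s|)%:E <= (norm1 w)%:E)%E.
  by rewrite (L2_period_norm1 w2).
have far s := kernel_far_field (tan ((x - s) / 2)) (H1S_supnorm f1 s) yf.
have V1_le : `|V1 f w x y| <= (4 * pi)^-1 * (2 * (50 * e) * norm1 w).
  rewrite /V1 normrM normrN (ger0_norm (ltW c0)) ler_wpM2l ?(ltW c0) //.
  under eq_Rintegral do rewrite -mulrA -/(kernel1 _ _).
  apply: (abs_Rintegral_mean0_mul (b := (y < 0)%R)) => //; first by rewrite mulr_ge0 ?(ltW e0).
  by move=> s _; have [] := far s.
have V2_le : `|V2 f w x y| <= (4 * pi)^-1 * (10 * e * norm1 w).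
  rewrite /V2 normrM (ger0_norm (ltW c0)) ler_wpM2l ?(ltW c0) //.
  apply: abs_Rintegral_le_mul wW _ => [|s _]; first exact: mulr_gt0.
  by rewrite -mulrA normrM mulrC ler_wpM2r //; have [] := far s.
rewrite /normV; apply: le_trans (sqrt_sqrD_le _ _) _; lra.
Qed.
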